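(* Let $(G,\varphi)$ be a complex unit gain graph, let $u$ be a pendant vertex of $G$ with neighbour $v$, and let $G_0=G-\{u,v\}$. Then $r(G,\varphi)=2|V(G)|-2c(G)-2\alpha(G)$ if and only if $v$ does not lie on any cycle of $G$ and $r(G_0,\varphi)=2|V(G_0)|-2c(G_0)-2\alpha(G_0)$.
   Context: A complex unit gain graph $(G,\varphi)$ is a simple finite graph $G$ with a gain function $\varphi$ assigning to each oriented edge $e_{ij}$ a complex number of modulus $1$ with $\varphi(e_{ji})=\overline{\varphi(e_{ij})}$; its adjacency matrix has $(i,j)$-entry $\varphi(e_{ij})$ for adjacent $v_i,v_j$ and $0$ otherwise, and $r(G,\varphi)$ is its rank; induced subgraphs carry the restricted gain. $\alpha$ is the independence number and $c(G)=|E(G)|-|V(G)|+\omega(G)$ the cyclomatic number ($\omega$ = number of components). A pendant vertex is a vertex of degree $1$. *)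

From HB Require Import structures.
From mathcomp Require Import all_boot all_order all_algebra.
From mathcomp Require Import complex.
From mathcomp Require Import reals.
Set Implicit Arguments. Unset Strict Implicit. Unset Printing Implicit Defensive.
Import Order.TTheory GRing.Theory Num.Theory.
Local Open Scope ring_scope.

(* A simple graph G is given by a vertex set V : {set T} (T a finType) and an
   adjacency relation adj : rel T; only edges between vertices of V count. *)

Definition simple_graph (T : finType) (adj : rel T) : Prop :=
  (forall x y, adj x y = adj y x) /\ (forall x, ~~ adj x x).

Definition radj (T : finType) (V : {set T}) (adj : rel T) : rel T :=
  fun x y => [&& x \in V, y \in V & adj x y].

Definition unit_gain (R : realType) (T : finType) (V : {set T}) (adj : rel T)
  (phi : T -> T -> R[i]) : Prop :=
  forall x y, radj V adj x y -> `|phi x y| = 1 /\ phi y x = (phi x y)^*.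

Definition gain_adj_mx (R : realType) (T : finType) (V : {set T}) (adj : rel T)
  (phi : T -> T -> R[i]) : 'M[R[i]]_#|V| :=
  \matrix_(i, j) (if adj (enum_val i) (enum_val j)
                  then phi (enum_val i) (enum_val j) else 0).

Definition gain_rank (R : realType) (T : finType) (V : {set T}) (adj : rel T)
  (phi : T -> T -> R[i]) : nat := \rank (gain_adj_mx V adj phi).

Definition edge_set (T : finType) (V : {set T}) (adj : rel T) : {set {set T}} :=
  [set e : {set T} | [exists x, exists y, radj V adj x y && (e == [set x; y])]].

Definition n_components (T : finType) (V : {set T}) (adj : rel T) : nat :=
  #|[set [set y in V | connect (radj V adj) x y] | x in V]|.

Definition cyclomatic (T : finType) (V : {set T}) (adj : rel T) : int :=
  (#|edge_set V adj|)%:Z - (#|V|)%:Z + (n_components V adj)%:Z.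

Definition independent (T : finType) (V : {set T}) (adj : rel T) (S : {set T}) : bool :=
  (S \subset V) && [forall x in S, forall y in S, ~~ adj x y].

Definition indep_number (T : finType) (V : {set T}) (adj : rel T) : nat :=
  \max_(S : {set T} | independent V adj S) #|S|.

Definition on_cycle (T : finType) (V : {set T}) (adj : rel T) (v : T) : Prop :=
  exists p : seq T, [/\ uniq p, (3 <= size p)%N, v \in p & cycle (radj V adj) p].

Definition pendant (T : finType) (V : {set T}) (adj : rel T) (u : T) : Prop :=
  u \in V /\ #|[set w in V | adj u w]| = 1%N.

From HB Require Import structures.
From mathcomp Require Import all_boot all_order all_algebra.
From mathcomp Require Import complex.
From mathcomp Require Import reals.
From mathcomp Require Import zify.
Import Order.TTheory GRing.Theory Num.Theory.

(* Write b(G) = 2|V| - 2c(G) - 2alpha(G).  First, r(G) >= b(G) for every gain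
   graph, by induction on |V|: deleting a vertex on a cycle lowers c by at least
   one, deleting an isolated vertex lowers alpha by one, and a nonempty forest
   has a vertex of degree at most one.  Deleting a pendant vertex u with its
   neighbour v lowers r by exactly 2 (with u, v listed first, the adjacency
   matrix reduces to the invertible 2x2 block of u, v and the matrix of
   G - u - v), lowers alpha by exactly 1, and gives
     r(G) - b(G) = r(G0) - b(G0) + 2 (c(G) - c(G0)),
   a sum of two nonnegative terms, the second vanishing exactly when v lies on
   no cycle of G. *)

Set Implicit Arguments. Unset Strict Implicit. Unset Printing Implicit Defensive.

Section MatrixRank.
Local Open Scope ring_scope.
Variable F : fieldType.

Lemma mxrank_mxsub m n m' n' (f : 'I_m' -> 'I_m) (g : 'I_n' -> 'I_n)
    (A : 'M[F]_(m, n)) :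
  (\rank (mxsub f g A) <= \rank A)%N.
Proof.
have -> : mxsub f g A = rowsub f (colsub g A) by apply/matrixP=> i j; rewrite !mxE.
apply: leq_trans (mxrankS (rowsub_sub f _)) _.
by rewrite -mxrank_tr -[leqRHS]mxrank_tr trmx_mxsub mxrankS ?rowsub_sub.
Qed.

Lemma mxrank_relabel (T : finType) (E : T -> T -> F) k1 k2
    (w1 : 'I_k1 -> T) (w2 : 'I_k2 -> T) :
  (forall i, w2 i \in codom w1) ->
  (\rank (\matrix_(i, j) E (w2 i) (w2 j)) <= \rank (\matrix_(i, j) E (w1 i) (w1 j)))%N.
Proof.
move=> w21; pose g i := iinv (w21 i).
have -> : \matrix_(i, j) E (w2 i) (w2 j) = mxsub g g (\matrix_(i, j) E (w1 i) (w1 j)).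
  by apply/matrixP=> i j; rewrite !mxE !f_iinv.
exact: mxrank_mxsub.
Qed.

Lemma mxrank_block_mx_factor m n (P : 'M[F]_m) (X : 'M[F]_(n, m))
    (Y : 'M[F]_(m, n)) (A : 'M[F]_n) :
  \rank (block_mx P (P *m Y) (X *m P) A) = (\rank P + \rank (A - X *m P *m Y)%R)%N.
Proof.
pose L : 'M[F]_(m + n) := block_mx 1%:M 0 X 1%:M.
pose U : 'M[F]_(m + n) := block_mx 1%:M Y 0 1%:M.
have -> : block_mx P (P *m Y) (X *m P) A
          = L *m block_mx P 0 0 (A - X *m P *m Y) *m U.
  rewrite !mulmx_block !(mul1mx, mulmx1, mul0mx, mulmx0, addr0, add0r).
  by rewrite addrC subrK.
have uL : L \in unitmx by rewrite unitmxE det_lblock !det1 mulr1 unitr1.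
have uU : U \in unitmx by rewrite unitmxE det_ublock !det1 mulr1 unitr1.
rewrite mxrankMfree ?row_free_unit //.
have /eqmxMfull -> : row_full L by rewrite row_full_unit.
exact: rank_diag_block_mx.
Qed.

Lemma mxrank_pendant_block n (P : 'M[F]_2) (Q : 'M[F]_(2, n)) (Q' : 'M[F]_(n, 2))
    (A : 'M[F]_n) :
  P ord0 ord0 = 0 -> P ord0 ord_max != 0 -> P ord_max ord0 != 0 ->
  (forall j, Q ord0 j = 0) -> (forall i, Q' i ord0 = 0) ->
  \rank (block_mx P Q Q' A) = (2 + \rank A)%N.
Proof.
move=> P00 a_neq0 c_neq0 Q0 Q'0.
set a := P ord0 ord_max in a_neq0; set c := P ord_max ord0 in c_neq0.
have ord2 (i : 'I_2) : i = ord0 \/ i = ord_max.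
  by case: i => [[|[|k]] lt_i2]; [left; apply/val_inj | right; apply/val_inj | ].
pose Y : 'M[F]_(2, n) := \matrix_(i, j) (if i == ord0 then Q ord_max j / c else 0).
pose X : 'M[F]_(n, 2) := \matrix_(i, j) (if j == ord0 then Q' i ord_max / a else 0).
have PY : P *m Y = Q.
  apply/matrixP=> i j; rewrite !mxE !big_ord_recl big_ord0 !mxE /=.
  by case: (ord2 i) => ->; rewrite -/a -/c ?P00 ?mul0r ?mulr0 ?addr0 ?add0r ?Q0 // mulrC divfK.
have XP : X *m P = Q'.
  apply/matrixP=> i j; rewrite !mxE !big_ord_recl big_ord0 !mxE /=.
  by case: (ord2 j) => ->; rewrite -/a -/c ?P00 ?mul0r ?mulr0 ?addr0 ?add0r ?Q'0 // divfK.
have XQ : X *m Q = 0.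
  apply/matrixP=> i j; rewrite !mxE !big_ord_recl big_ord0 !mxE /=.
  by rewrite Q0 mulr0 mul0r !addr0.
have rankP : \rank P = 2%N.
  apply: mxrank_unit; rewrite unitmxE (expand_det_row _ ord0) !big_ord_recl big_ord0.
  rewrite /cofactor !det_mx11 !mxE /= -/a P00 mul0r add0r addr0 unitfE expr1.
  rewrite mulN1r mulrN oppr_eq0 mulf_neq0 //.
    by move: a_neq0; congr (P _ _ != 0); apply/val_inj.
  by move: c_neq0; congr (P _ _ != 0); apply/val_inj.
(* [X P Y = X Q = 0]: the Schur complement of [P] is [A] itself. *)
by rewrite -PY -XP mxrank_block_mx_factor -mulmxA PY XQ subr0 rankP.
Qed.

End MatrixRank.

Lemma proper_set_ind (T : finType) (P : {set T} -> Prop) :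
  (forall V : {set T}, (forall W : {set T}, W \proper V -> P W) -> P V) ->
  forall V, P V.
Proof.
move=> IH V; elim/ltn_ind: {V}#|V| {-2}V (erefl #|V|) => n IHn V nV.
by apply: IH => W /proper_card; rewrite nV => /IHn; apply.
Qed.

Section Graph.
Variables (T : finType) (adj : rel T).
Hypothesis adj_sym : forall x y, adj x y = adj y x.
Hypothesis adj_irr : forall x, ~~ adj x x.
Implicit Types (V W S : {set T}) (x y z : T).

Definition nbhd V x := [set y in V | adj x y].
Definition component V x := [set y in V | connect (radj V adj) x y].
Definition nbhd_components V x := component (V :\ x) @: nbhd V x.

Lemma radj_sym V : symmetric (radj V adj).
Proof. by move=> x y; rewrite /radj adj_sym andbCA. Qed.

Lemma connect_radj_sym V : connect_sym (radj V adj).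
Proof. exact/sym_connect_sym/radj_sym. Qed.

Lemma radjS W V : W \subset V -> subrel (radj W adj) (radj V adj).
Proof. by move=> sWV x y /and3P[xW yW xy]; rewrite /radj xy !(subsetP sWV). Qed.

Lemma connect_radjS W V x y :
  W \subset V -> connect (radj W adj) x y -> connect (radj V adj) x y.
Proof. by move=> sWV; apply: connect_sub => a b /(radjS sWV) /connect1. Qed.

Lemma path_radj_setD1 V x y p : y != x -> x \notin p ->
  path (radj V adj) y p -> path (radj (V :\ x) adj) y p.
Proof.
elim: p y => //= z p IHp y yx; rewrite inE negb_or => /andP[zx xp].
case/andP=> /and3P[yV zV yz] zp; rewrite IHp 1?eq_sym // andbT.
by rewrite /radj !in_setD1 yV zV yz yx eq_sym zx.
Qed.

Lemma path_radj_sub V y p : path (radj V adj) y p -> {subset p <= V}.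
Proof.
elim: p y => //= z p IHp y /andP[/and3P[_ zV _] zp] w.
by rewrite inE => /orP[/eqP-> // | /(IHp _ zp)].
Qed.

Lemma nbhd_neq V x y : y \in nbhd V x -> y != x.
Proof. by rewrite inE => /andP[_]; apply: contraTneq => ->. Qed.

Lemma mem_setD1_adj V x y : y \in V -> adj x y -> y \in V :\ x.
Proof. by move=> yV xy; rewrite in_setD1 yV andbT; apply: contraTneq xy => ->. Qed.

Lemma nbhd_sub_setD1 V x : nbhd V x \subset V :\ x.
Proof. by apply/subsetP=> y /setIdP[yV xy]; apply: mem_setD1_adj. Qed.

Lemma mem_nbhd_radj V x y : x \in V -> (y \in nbhd V x) = radj V adj x y.
Proof. by move=> xV; rewrite inE /radj xV. Qed.

Lemma mem_component V x y :
  (y \in component V x) = (y \in V) && connect (radj V adj) x y.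
Proof. by rewrite inE. Qed.

Lemma component_id V x : x \in V -> x \in component V x.
Proof. by move=> xV; rewrite mem_component xV connect0. Qed.

Lemma component_eq V x y : connect (radj V adj) x y -> component V x = component V y.
Proof.
move=> xy; apply/setP=> z; rewrite !mem_component; case: (z \in V) => //=.
apply/idP/idP => [xz | yz]; last exact: connect_trans xy yz.
by apply: connect_trans xz; rewrite connect_radj_sym.
Qed.

Lemma component_eqP V x y : x \in V -> y \in V ->
  reflect (component V x = component V y) (connect (radj V adj) x y).
Proof.
move=> xV yV; apply: (iffP idP) => [/component_eq // | Exy].
by move: (component_id yV); rewrite -Exy mem_component => /andP[].
Qed.

Lemma card_edge_setD1 V x : x \in V ->
  #|edge_set V adj| = (#|edge_set (V :\ x) adj| + #|nbhd V x|)%N.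
Proof.
move=> xV; pose Ex := [set [set x; y] | y in nbhd V x].
have -> : edge_set V adj = edge_set (V :\ x) adj :|: Ex.
  apply/setP=> e; rewrite in_setU !inE; apply/idP/idP.
    case/existsP=> a /existsP[b /andP[rab /eqP->]].
    case: (eqVneq a x) rab => [-> | ax] rab.
      by apply/orP; right; apply/imsetP; exists b; rewrite ?mem_nbhd_radj.
    case: (eqVneq b x) rab => [-> | bx] rab.
      apply/orP; right; apply/imsetP; exists a; last by rewrite setUC.
      by rewrite mem_nbhd_radj // radj_sym.
    apply/orP; left; apply/existsP; exists a; apply/existsP; exists b.
    by case/and3P: rab => aV bV ab; rewrite /radj !in_setD1 ax bx aV bV ab /=.
  case/orP=> [/existsP[a /existsP[b /andP[rab /eqP->]]] | /imsetP[y yN ->]].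
    apply/existsP; exists a; apply/existsP; exists b.
    by rewrite (radjS (subD1set V x) rab) eqxx.
  by apply/existsP; exists x; apply/existsP; exists y; rewrite -mem_nbhd_radj ?yN ?eqxx.
rewrite cardsU card_in_imset; last first.
  move=> y z yN zN Eyz; have : y \in [set x; z] by rewrite -Eyz !inE eqxx orbT.
  by rewrite !inE (negbTE (nbhd_neq yN)) => /eqP.
suff -> : edge_set (V :\ x) adj :&: Ex = set0 by rewrite cards0 subn0.
apply/setP=> e; rewrite !inE; apply/negP=> /andP[/existsP[a /existsP[b]]].
case/andP=> /and3P[aW bW _] /eqP-> /imsetP[y _ Exy].
have : x \in [set a; b] by rewrite Exy !inE eqxx.
by rewrite !inE; case/orP=> /eqP xab; rewrite -xab setD11 in aW bW.
Qed.

Lemma edge_set_set0 : edge_set set0 adj = set0.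
Proof.
apply/setP=> e; rewrite !inE; apply/existsP=> [[a /existsP[b]]].
by rewrite /radj inE.
Qed.

Lemma sum_card_nbhd V : (\sum_(y in V) #|nbhd V y| = 2 * #|edge_set V adj|)%N.
Proof.
elim/proper_set_ind: V => V IHV.
have [-> | [x xV]] := set_0Vmem V; first by rewrite big_set0 edge_set_set0 cards0.
have nbhdD1 y : y \in V :\ x -> #|nbhd V y| = (#|nbhd (V :\ x) y| + adj x y)%N.
  move=> yW; rewrite (cardsD1 x (nbhd V y)) addnC inE xV adj_sym; congr (_ + _)%N.
  by apply: eq_card => z; rewrite !inE andbA.
have deg_x : (\sum_(y in V :\ x) adj x y = #|nbhd V x|)%N.
  rewrite (eq_bigr (fun y => if adj x y then 1 else 0)%N) // -big_mkcondr.
  rewrite sum1dep_card; apply: eq_card => y; rewrite !inE andbC andbA.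
  by have [-> | _] := eqVneq y x; rewrite ?(negbTE (adj_irr x)) ?andbF //= andbT andbC.
rewrite (big_setD1 x xV) (eq_bigr _ nbhdD1) big_split /= deg_x IHV ?properD1 //.
by rewrite (card_edge_setD1 xV); lia.
Qed.

Lemma component_setD1 V x y : y \in V -> y \notin component V x ->
  component V y = component (V :\ x) y.
Proof.
move=> yV yNK; apply/setP=> z; rewrite !mem_component; apply/idP/idP.
  case/andP=> zV /connectP[p yp Ez].
  have xNp : x \notin y :: p.
    apply: contra yNK => /(path_connect yp) yx.
    by rewrite mem_component yV connect_radj_sym.
  have zx : z != x by apply: contraNneq xNp => <-; rewrite Ez mem_last.
  move: xNp; rewrite inE negb_or eq_sym => /andP[yx xNp].
  rewrite in_setD1 zx zV; apply/connectP; exists p => //.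
  exact: path_radj_setD1.
by case/andP=> /setD1P[_ zV] yz; rewrite zV (connect_radjS (subD1set V x) yz).
Qed.

Lemma nbhd_connect_setD1 V x y : y \in component V x -> y != x ->
  exists2 w, w \in nbhd V x & connect (radj (V :\ x) adj) w y.
Proof.
rewrite mem_component => /andP[_ /connectP[p xp ->]].
case/shortenP: xp => [[|w q]] //=; first by rewrite eqxx.
case/andP=> xw wq /andP[]; rewrite inE negb_or => /andP[xw_neq xNq] _ _ _.
exists w; first by case/and3P: xw => xV wV; rewrite inE wV.
by apply/connectP; exists q => //; apply: path_radj_setD1; rewrite // eq_sym.
Qed.

Lemma components_setD1_nbhd V x : x \in V ->
  component (V :\ x) @: (component V x :\ x) = nbhd_components V x.
Proof.
move=> xV; apply/setP=> C; apply/imsetP/imsetP => [[y /setD1P[yx yK] ->] | [w wN ->]].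
  have [w wN wy] := nbhd_connect_setD1 yK yx.
  by exists w => //; apply/component_eq; rewrite connect_radj_sym.
exists w => //; rewrite in_setD1 (nbhd_neq wN) mem_component.
by move: wN; rewrite mem_nbhd_radj // => xw; rewrite (connect1 xw) andbT; case/and3P: xw.
Qed.

Lemma n_components_component V x : x \in V ->
  n_components V adj = (#|component V @: (V :\: component V x)| + 1)%N.
Proof.
move=> xV; set K := component V x; have xK : x \in K := component_id xV.
rewrite /n_components; have -> : component V @: V = K |: component V @: (V :\: K).
  apply/setP=> C; rewrite in_setU1; apply/imsetP/predU1P.
    case=> y yV ->; have [yK | yNK] := boolP (y \in K).
      by left; apply/esym/component_eq; move: yK; rewrite mem_component => /andP[].
    by right; apply/imsetP; exists y; rewrite // in_setD yNK.
  by case=> [-> | /imsetP[y /setDP[yV _] ->]]; [exists x | exists y].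
suff KN : K \notin component V @: (V :\: K) by rewrite cardsU1 KN addnC.
apply/imsetP=> [[y /setDP[yV yNK] Ky]].
by case/negP: yNK; move: xK; rewrite {1}Ky !mem_component yV connect_radj_sym => /andP[_ ->].
Qed.

Lemma n_components_setD1_component V x : x \in V ->
  n_components (V :\ x) adj
  = (#|component (V :\ x) @: (V :\: component V x)| + #|nbhd_components V x|)%N.
Proof.
move=> xV; set K := component V x; set W := V :\ x; have xK : x \in K := component_id xV.
have EW : W = (V :\: K) :|: (K :\ x).
  apply/setP=> y; rewrite in_setU in_setD !in_setD1; have [yK | yNK] := boolP (y \in K).
    by move: yK; rewrite mem_component => /andP[->]; rewrite andbT.
  by rewrite andbF orbF /=; have [yx | //] := eqVneq y x; move: yNK; rewrite yx xK.
have -> : n_components W adj = #|component W @: ((V :\: K) :|: (K :\ x))| by rewrite -EW.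
rewrite imsetU components_setD1_nbhd // cardsU.
suff -> : component W @: (V :\: K) :&: nbhd_components V x = set0 by rewrite cards0 subn0.
rewrite -components_setD1_nbhd //; apply/setP=> C; rewrite !inE; apply/negP.
case/andP=> /imsetP[y /setDP[yV yNK] ->] /imsetP[z /setD1P[zx zK] Eyz].
have yx : y != x by apply: contraNneq yNK => ->.
have zV : z \in V by move: zK; rewrite mem_component => /andP[].
have /(connect_radjS (subD1set V x)) zy : connect (radj W adj) z y.
  by apply/component_eqP; rewrite ?in_setD1 ?yx ?zx.
case/negP: yNK; move: zK; rewrite !mem_component yV => /andP[_ xz].
exact: connect_trans xz zy.
Qed.

Lemma n_components_setD1 V x : x \in V ->
  (n_components V adj + #|nbhd_components V x| = n_components (V :\ x) adj + 1)%N.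
Proof.
move=> xV; rewrite (n_components_component xV) (n_components_setD1_component xV).
suff -> : component V @: (V :\: component V x)
        = component (V :\ x) @: (V :\: component V x) by lia.
by apply: eq_in_imset => y /setDP[yV yNK]; apply: component_setD1.
Qed.

Lemma on_cycle_connect_nbhd V x : on_cycle V adj x -> exists y z,
  [/\ y \in nbhd V x, z \in nbhd V x, y != z & connect (radj (V :\ x) adj) y z].
Proof.
case=> p [up size_p xp cp]; case: (rot_to xp) => i s Ep.
have /= /andP[xNs us] : uniq (x :: s) by rewrite -Ep rot_uniq.
have : cycle (radj V adj) (x :: s) by rewrite -Ep rot_cycle.
have : (2 <= size s)%N by rewrite -ltnS -[(size s).+1]/(size (x :: s)) -Ep size_rot.
case: s xNs us {Ep} => [|y [|z q]] // xNs /andP[yNzq _] _ /=; rewrite rcons_path.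
case/and3P=> xy yz /andP[zq wx]; move: xNs; rewrite inE negb_or => /andP[xy_neq xNzq].
exists y, (last z q); split.
- by case/and3P: xy => xV yV xy; rewrite inE yV.
- by case/and3P: wx => wV xV wx; rewrite inE wV adj_sym.
- by apply: contraNneq yNzq => ->; apply: mem_last.
apply/connectP; exists (z :: q) => //; apply: path_radj_setD1; rewrite 1?eq_sym //=.
by rewrite yz.
Qed.

Lemma connect_nbhd_on_cycle V x y z : x \in V -> y \in nbhd V x -> z \in nbhd V x ->
  y != z -> connect (radj (V :\ x) adj) y z -> on_cycle V adj x.
Proof.
move=> xV yN zN yz /connectP[p yp Ez]; case/shortenP: yp Ez => q yq uq _ Ez.
have xNq : x \notin q by apply/negP=> /(path_radj_sub yq); rewrite setD11.
exists (x :: y :: q); split => //.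
- by rewrite cons_uniq uq inE negb_or xNq andbT eq_sym (nbhd_neq yN).
- by case: q Ez {yq uq xNq} => // Ez; rewrite Ez eqxx in yz.
- exact: mem_head.
rewrite /= rcons_path -mem_nbhd_radj // yN (sub_path (radjS (subD1set V x)) yq) /=.
by rewrite -Ez radj_sym -mem_nbhd_radj.
Qed.

Lemma card_nbhd_components_le V x : (#|nbhd_components V x| <= #|nbhd V x|)%N.
Proof. exact: leq_imset_card. Qed.

Lemma on_cycleP V x : x \in V ->
  reflect (on_cycle V adj x) (#|nbhd_components V x| < #|nbhd V x|)%N.
Proof.
move=> xV; rewrite ltn_neqAle card_nbhd_components_le andbT.
have sNW := subsetP (nbhd_sub_setD1 V x).
apply: (iffP idP) => [card_neq | /on_cycle_connect_nbhd[y [z [yN zN yz yCz]]]].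
  pose linked y z := (y != z) && connect (radj (V :\ x) adj) y z.
  have [/exists_inP[y yN /exists_inP[z zN /andP[yz yCz]]] | noLink] :=
    boolP [exists y in nbhd V x, exists z in nbhd V x, linked y z].
    exact: connect_nbhd_on_cycle xV yN zN yz yCz.
  case/negP: card_neq; apply/imset_injP => y z yN zN Eyz; apply/eqP.
  apply: contraNT noLink => yz; apply/exists_inP; exists y => //.
  apply/exists_inP; exists z; rewrite // /linked yz.
  exact/(component_eqP (sNW y yN) (sNW z zN)).
apply: contra yz => /imset_injP inj_comp.
by apply/eqP/inj_comp => //; apply: component_eq.
Qed.

Lemma cyclomatic_setD1 V x : x \in V ->
  cyclomatic V adj
  = (cyclomatic (V :\ x) adj + #|nbhd V x|%:Z - #|nbhd_components V x|%:Z)%R.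
Proof.
move=> xV; have := n_components_setD1 xV.
by rewrite /cyclomatic (card_edge_setD1 xV) (cardsD1 x V) xV; lia.
Qed.

Lemma cyclomatic_setD1_le V x : x \in V ->
  (cyclomatic (V :\ x) adj <= cyclomatic V adj)%R.
Proof.
by move=> xV; have := card_nbhd_components_le V x; rewrite (cyclomatic_setD1 xV); lia.
Qed.

Lemma cyclomatic_setD1_lt V x : x \in V -> on_cycle V adj x ->
  (cyclomatic (V :\ x) adj < cyclomatic V adj)%R.
Proof. by move=> xV /(on_cycleP xV); rewrite (cyclomatic_setD1 xV); lia. Qed.

Lemma cyclomatic_setD1_eq V x : x \in V -> ~ on_cycle V adj x ->
  cyclomatic (V :\ x) adj = cyclomatic V adj.
Proof.
move=> xV /(introN (on_cycleP xV)); have := card_nbhd_components_le V x.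
by rewrite (cyclomatic_setD1 xV); lia.
Qed.

Lemma on_cycleS W V x : W \subset V -> on_cycle W adj x -> on_cycle V adj x.
Proof. by move=> sWV [p [up size_p xp cp]]; exists p; rewrite (sub_cycle (radjS sWV)). Qed.

Lemma pendant_nbhd V u v : pendant V adj u -> v \in V -> adj u v -> nbhd V u = [set v].
Proof.
case=> _ /eqP/cards1P[w Nu] vV uv.
have : v \in nbhd V u by rewrite inE vV.
by rewrite /nbhd Nu => /set1P->.
Qed.

Lemma pendant_not_on_cycle V u : pendant V adj u -> ~ on_cycle V adj u.
Proof.
case=> _ deg_u /on_cycle_connect_nbhd[y [z [yN zN yz _]]].
have : (#|[set y; z]| <= #|nbhd V u|)%N.
  by apply/subset_leq_card/subUsetP; rewrite !sub1set yN zN.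
by rewrite cards2 yz [#|_|]deg_u.
Qed.

Lemma on_cycle_setD1_pendant V u v : pendant V adj u -> on_cycle V adj v ->
  on_cycle (V :\ u) adj v.
Proof.
move=> pu [p [up size_p vp cp]].
have uNp : u \notin p by apply/negP=> up'; apply: (pendant_not_on_cycle pu); exists p.
exists p; split => //; case: p uNp cp {up size_p vp} => [|a q] //=.
rewrite inE negb_or => /andP[ua uNq]; apply: path_radj_setD1; first by rewrite eq_sym.
by rewrite mem_rcons inE negb_or ua.
Qed.

Lemma independentP V S : reflect (S \subset V /\ {in S &, forall a b, ~~ adj a b})
  (independent V adj S).
Proof.
apply: (iffP andP) => [[sSV /forall_inP indS] | [sSV indS]]; split => //.
  by move=> a b aS; move/forall_inP: (indS a aS); apply.
by apply/forall_inP=> a aS; apply/forall_inP=> b bS; apply: indS.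
Qed.

Lemma indep_number_witness V : exists2 S, independent V adj S & indep_number V adj = #|S|.
Proof.
have : (0 < #|independent V adj|)%N.
  apply/card_gt0P; exists set0; rewrite unfold_in; apply/independentP.
  by split=> [|a b]; rewrite ?sub0set ?inE.
by case/(eq_bigmax_cond (fun S : {set T} => #|S|)) => S indS maxS; exists S.
Qed.

Lemma leq_indep_number V S : independent V adj S -> (#|S| <= indep_number V adj)%N.
Proof. exact: leq_bigmax_cond. Qed.

Lemma indep_numberS W V : W \subset V -> (indep_number W adj <= indep_number V adj)%N.
Proof.
move=> sWV; have [S /independentP[sSW indS] ->] := indep_number_witness W.
by apply/leq_indep_number/independentP; rewrite (subset_trans sSW sWV).
Qed.

Lemma indep_number_add_vertex V W x : x \in V -> W \subset V :\ x ->
  {in W, forall y, ~~ adj x y} -> (indep_number W adj + 1 <= indep_number V adj)%N.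
Proof.
move=> xV sWV xNW; have [S /independentP[sSW indS] ->] := indep_number_witness W.
have xNS : x \notin S by apply/negP=> /(subsetP (subset_trans sSW sWV)); rewrite setD11.
have -> : (#|S| + 1 = #|x |: S|)%N by rewrite cardsU1 xNS addnC.
apply/leq_indep_number/independentP; split.
  by rewrite subUset sub1set xV (subset_trans sSW (subset_trans sWV (subD1set V x))).
have xNadj y : y \in S -> ~~ adj x y by move/(subsetP sSW)/xNW.
move=> a b /setU1P[-> | aS] /setU1P[-> | bS]; rewrite ?adj_irr ?xNadj //.
- by rewrite adj_sym xNadj.
- exact: indS.
Qed.

Lemma indep_number_pendant V u v : pendant V adj u -> v \in V -> adj u v ->
  indep_number V adj = (indep_number (V :\ u :\ v) adj + 1)%N.
Proof.
move=> pu vV uv; have uV := pu.1; have Nu := pendant_nbhd pu vV uv.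
apply/eqP; rewrite eqn_leq; apply/andP; split; last first.
  apply: (indep_number_add_vertex (x := u)) => //; first exact: subD1set.
  move=> y /setD1P[yv /setD1P[_ yV]]; apply: contra yv => uy.
  by rewrite -in_set1 -Nu inE yV.
have [S /independentP[sSV indS] ->] := indep_number_witness V.
have : (#|S :\ u :\ v| <= indep_number (V :\ u :\ v) adj)%N.
  apply/leq_indep_number/independentP; split; first by rewrite !setSD.
  by move=> a b /setD1P[_ /setD1P[_ aS]] /setD1P[_ /setD1P[_ bS]]; apply: indS.
have uSvS : ~~ ((u \in S) && (v \in S)).
  by apply/andP=> [[uS vS]]; move: (indS u v uS vS); rewrite uv.
rewrite (cardsD1 u S) (cardsD1 v (S :\ u)) in_setD1.
by case: (u \in S) (v \in S) uSvS => [] [] /=; lia.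
Qed.

Definition forest V := {in V, forall x, ~ on_cycle V adj x}.

Lemma forest_or_on_cycle V : forest V \/ exists2 x, x \in V & on_cycle V adj x.
Proof.
have [/exists_inP[x xV /(on_cycleP xV) x_cyc] | /exists_inPn acyclic] :=
  boolP [exists x in V, #|nbhd_components V x| < #|nbhd V x|]%N; last first.
  by left=> x xV /(on_cycleP xV); apply/negP/acyclic.
by right; exists x.
Qed.

Lemma cyclomatic_set0 : cyclomatic set0 adj = 0%R.
Proof. by rewrite /cyclomatic edge_set_set0 /n_components imset0 !cards0. Qed.

Lemma cyclomatic_forest V : forest V -> cyclomatic V adj = 0%R.
Proof.
elim/proper_set_ind: V => V IHV forestV.
have [-> | [x xV]] := set_0Vmem V; first exact: cyclomatic_set0.
rewrite -(cyclomatic_setD1_eq xV (forestV x xV)); apply: IHV; first exact: properD1.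
by move=> y /setD1P[_ yV] /(on_cycleS (subD1set V x)); apply: forestV.
Qed.

Lemma forest_leaf V : V != set0 -> forest V -> exists2 x, x \in V & (#|nbhd V x| <= 1)%N.
Proof.
case/set0Pn=> x0 x0V forestV; apply/exists_inP; apply: contraT.
rewrite negb_exists_in => /forall_inP deg_ge2.
have : (\sum_(y in V) 2 <= \sum_(y in V) #|nbhd V y|)%N.
  by apply: leq_sum => y /deg_ge2; rewrite -ltnNge.
have : (0 < n_components V adj)%N by apply/card_gt0P; exists (component V x0); apply: imset_f.
have := cyclomatic_forest forestV.
by rewrite sum_nat_const sum_card_nbhd /cyclomatic; lia.
Qed.

Lemma cyclomatic_pendant V u : pendant V adj u -> cyclomatic (V :\ u) adj = cyclomatic V adj.
Proof. by move=> pu; apply: cyclomatic_setD1_eq pu.1 (pendant_not_on_cycle pu). Qed.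

Section PendantNeighbour.
Variables (V : {set T}) (u v : T).
Hypotheses (pu : pendant V adj u) (vV : v \in V) (uv : adj u v).

Lemma cyclomatic_pendant_neighbour_le :
  (cyclomatic (V :\ u :\ v) adj <= cyclomatic V adj)%R.
Proof. by rewrite -(cyclomatic_pendant pu) cyclomatic_setD1_le ?(mem_setD1_adj vV uv). Qed.

Lemma cyclomatic_pendant_neighbour_eq :
  cyclomatic (V :\ u :\ v) adj = cyclomatic V adj <-> ~ on_cycle V adj v.
Proof.
rewrite -(cyclomatic_pendant pu); have vW := mem_setD1_adj vV uv.
split=> [c_eq /(on_cycle_setD1_pendant pu) v_cyc | vNC].
  by have := cyclomatic_setD1_lt vW v_cyc; rewrite c_eq ltxx.
by apply: cyclomatic_setD1_eq vW _ => /(on_cycleS (subD1set V u)).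
Qed.

End PendantNeighbour.

Definition rank_bound V : int :=
  2%:Z * (#|V|)%:Z - 2%:Z * cyclomatic V adj - 2%:Z * (indep_number V adj)%:Z.

Lemma rank_bound_set0 : rank_bound set0 = 0%R.
Proof.
rewrite /rank_bound cyclomatic_set0 cards0.
suff -> : indep_number set0 adj = 0%N by [].
have [S /independentP[sS0 _] ->] := indep_number_witness set0.
by apply/eqP; rewrite cards_eq0 -subset0.
Qed.

Lemma rank_bound_setD1_on_cycle V x : x \in V -> on_cycle V adj x ->
  (rank_bound V <= rank_bound (V :\ x))%R.
Proof.
move=> xV x_cyc; have := cyclomatic_setD1_lt xV x_cyc.
have := indep_numberS (subD1set V x); have := cardsD1 x V.
by rewrite /rank_bound xV; lia.
Qed.

Lemma rank_bound_setD1_isolated V x : x \in V -> nbhd V x = set0 ->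
  (rank_bound V <= rank_bound (V :\ x))%R.
Proof.
move=> xV Nx; have xNadj : {in V :\ x, forall y, ~~ adj x y}.
  move=> y /setD1P[_ yV]; apply/negP=> xy.
  have : y \in nbhd V x by rewrite inE yV.
  by rewrite Nx inE.
have := indep_number_add_vertex xV (subxx _) xNadj; have := cardsD1 x V.
have := cyclomatic_setD1 xV; rewrite /nbhd_components Nx imset0 !cards0.
by rewrite /rank_bound xV; lia.
Qed.

Lemma rank_bound_pendant V u v : pendant V adj u -> v \in V -> adj u v ->
  rank_bound V
  = (rank_bound (V :\ u :\ v) + 2%:Z
     - 2%:Z * (cyclomatic V adj - cyclomatic (V :\ u :\ v) adj))%R.
Proof.
move=> pu vV uv; have := indep_number_pendant pu vV uv.
have := cardsD1 u V; have := cardsD1 v (V :\ u).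
by rewrite pu.1 (mem_setD1_adj vV uv) /rank_bound; lia.
Qed.

End Graph.

Section GainRank.
Local Open Scope ring_scope.
Variables (R : realType) (T : finType) (adj : rel T) (phi : T -> T -> R[i]).
Hypothesis adj_sym : forall x y, adj x y = adj y x.
Hypothesis adj_irr : forall x, ~~ adj x x.
Implicit Types (V W : {set T}) (x y u v : T).

Definition gain_entry x y := if adj x y then phi x y else 0.

Lemma gain_rank_relabel V k (w : 'I_k -> T) :
  (forall i, w i \in V) -> {subset V <= codom w} ->
  gain_rank V adj phi = \rank (\matrix_(i, j) gain_entry (w i) (w j)).
Proof.
move=> wV Vw; apply/eqP; rewrite eqn_leq !(mxrank_relabel gain_entry) // => i.
  by rewrite -(enum_rankK_in (wV i) (wV i)) codom_f.
exact/Vw/enum_valP.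
Qed.

Lemma gain_rankS W V : W \subset V -> (gain_rank W adj phi <= gain_rank V adj phi)%N.
Proof.
move=> sWV; apply: (mxrank_relabel gain_entry) => i.
by have /(subsetP sWV) xV := enum_valP i; rewrite -(enum_rankK_in xV xV) codom_f.
Qed.

Lemma gain_rank_set0 : gain_rank set0 adj phi = 0%N.
Proof. by apply/eqP; rewrite -leqn0 -(cards0 T) rank_leq_row. Qed.

Lemma unit_gainS W V : W \subset V -> unit_gain V adj phi -> unit_gain W adj phi.
Proof. by move=> sWV gV x y /(radjS sWV) /gV. Qed.

Lemma gain_entry_neq0 V x y : unit_gain V adj phi -> radj V adj x y -> gain_entry x y != 0.
Proof.
move=> gV xy; rewrite /gain_entry; case/and3P: (xy) => _ _ ->.
by apply: contra_neq (oner_neq0 R[i]) => phi0; rewrite -(gV x y xy).1 phi0 normr0.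
Qed.

Lemma gain_rank_pendant V u v : unit_gain V adj phi -> pendant V adj u ->
  v \in V -> adj u v -> gain_rank V adj phi = (2 + gain_rank (V :\ u :\ v) adj phi)%N.
Proof.
move=> gV pu vV uv; set V0 := V :\ u :\ v; have uV := pu.1.
have uNadj y : y \in V0 -> ~~ adj u y.
  move=> /setD1P[yv /setD1P[_ yV]]; apply: contra yv => uy.
  by rewrite -in_set1 -(pendant_nbhd pu vV uv) inE yV.
pose w (k : 'I_(2 + #|V0|)) := match split k with
  | inl i => if i == ord0 then u else v
  | inr j => enum_val (j : 'I_#|V0|) end.
have wl i : w (lshift _ i) = if i == ord0 then u else v.
  by rewrite /w -[lshift _ i]/(unsplit (inl _ i)) unsplitK.
have wr j : w (rshift 2 j) = enum_val j.
  by rewrite /w -[rshift 2 j]/(unsplit (inr _ j)) unsplitK.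
rewrite (@gain_rank_relabel _ _ w); last first.
- move=> x xV; have [-> | xu] := eqVneq x u; first by rewrite -[u](wl ord0) codom_f.
  have [-> | xv] := eqVneq x v; first by rewrite -[v](wl ord_max) codom_f.
  have xV0 : x \in V0 by rewrite !in_setD1 xu xv.
  by rewrite -(enum_rankK_in xV0 xV0) -wr codom_f.
- move=> k; rewrite /w; case: split => [i | j]; first by case: eqP.
  by case/setD1P: (enum_valP j) => _ /setD1P[].
rewrite -[X in \rank X]submxK mxrank_pendant_block ?mxE ?wl ?wr //=.
- by congr (_ + _)%N; apply/congr1/matrixP => i j; rewrite !mxE !wr.
- by rewrite /gain_entry (negbTE (adj_irr u)).
- by apply: gain_entry_neq0 gV _; rewrite /radj uV vV.
- by apply: gain_entry_neq0 gV _; rewrite /radj uV vV adj_sym.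
- by move=> j; rewrite !mxE wl wr /gain_entry (negbTE (uNadj _ (enum_valP j))).
by move=> i; rewrite !mxE wl wr /gain_entry adj_sym (negbTE (uNadj _ (enum_valP i))).
Qed.

Lemma rank_bound_le_gain_rank V : unit_gain V adj phi ->
  rank_bound adj V <= (gain_rank V adj phi)%:Z.
Proof.
elim/proper_set_ind: V => V IHV gV.
have IH W : W \proper V -> rank_bound adj W <= (gain_rank W adj phi)%:Z.
  by move=> ltWV; apply/IHV/(unit_gainS (proper_sub ltWV)).
have IHD1 x : x \in V -> rank_bound adj (V :\ x) <= (gain_rank V adj phi)%:Z.
  move=> xV; apply: le_trans (IH _ (properD1 xV)) _.
  by rewrite lez_nat gain_rankS ?subD1set.
have [-> | V_neq0] := eqVneq V set0; first by rewrite rank_bound_set0 gain_rank_set0.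
have [forestV | [x xV x_cyc]] := forest_or_on_cycle adj_sym adj_irr V; last first.
  exact: le_trans (rank_bound_setD1_on_cycle adj_sym adj_irr xV x_cyc) (IHD1 x xV).
have [x xV] := forest_leaf adj_sym adj_irr V_neq0 forestV.
rewrite leq_eqVlt ltnS leqn0 cards_eq0 => /orP[/cards1P[v Nx] | /eqP Nx]; last first.
  exact: le_trans (rank_bound_setD1_isolated adj_sym adj_irr xV Nx) (IHD1 x xV).
have /setIdP[vV xv] : v \in nbhd adj V x by rewrite Nx set11.
have px : pendant V adj x by split; rewrite // -/(nbhd adj V x) Nx cards1.
have ltV0V : V :\ x :\ v \proper V := sub_proper_trans (subD1set _ v) (properD1 xV).
have := IH _ ltV0V; have := cyclomatic_pendant_neighbour_le adj_sym adj_irr px vV xv.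
rewrite (rank_bound_pendant adj_sym adj_irr px vV xv) (gain_rank_pendant gV px vV xv).
lia.
Qed.

End GainRank.

Unset Implicit Arguments.
Local Open Scope ring_scope.
Theorem lemma4p6 (R : realType) (T : finType) (V : {set T}) (adj : rel T)
  (phi : T -> T -> R[i]) (u v : T) :
  simple_graph adj -> unit_gain V adj phi ->
  pendant V adj u -> v \in V -> adj u v ->
  let V0 := V :\ u :\ v in
  ((gain_rank V adj phi)%:Z
     = 2%:Z * (#|V|)%:Z - 2%:Z * cyclomatic V adj - 2%:Z * (indep_number V adj)%:Z)
  <->
  (~ on_cycle V adj v /\
   (gain_rank V0 adj phi)%:Z
     = 2%:Z * (#|V0|)%:Z - 2%:Z * cyclomatic V0 adj - 2%:Z * (indep_number V0 adj)%:Z).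
Proof.
move=> [adj_sym adj_irr] gV pu vV uv V0.
rewrite -/(rank_bound adj V) -/(rank_bound adj V0).
have gV0 : unit_gain V0 adj phi.
  exact: unit_gainS (subset_trans (subD1set _ v) (subD1set V u)) gV.
have lb0 := rank_bound_le_gain_rank adj_sym adj_irr gV0.
have c_le := cyclomatic_pendant_neighbour_le adj_sym adj_irr pu vV uv.
have c_eq := cyclomatic_pendant_neighbour_eq adj_sym adj_irr pu vV uv.
rewrite -/V0 in c_le c_eq; rewrite (gain_rank_pendant adj_sym adj_irr gV pu vV uv).
rewrite (rank_bound_pendant adj_sym adj_irr pu vV uv) -/V0.
split=> [r_eq | [/c_eq c0 r0_eq]]; last lia.
have c0 : cyclomatic V0 adj = cyclomatic V adj by lia.
by split; [apply/c_eq | lia].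
Qed.
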